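(* Let $H$ be a discrete subgroup of the $\sigma$-compact locally compact (Hausdorff) group $G$, and let $\theta = \sum_{h\in H} c_h h \in \mathbb{C}H$. If $\sum_h c_h L_h f = 0$ for some nonzero $f \in L^2(G)$, then $\theta \ast k = 0$ for some nonzero $k \in \ell^2(H)$.
   Context: $L^2(G)$ is with respect to left Haar measure and $L_h f(x)=f(h^{-1}x)$. $\mathbb{C}H$ is the group ring of $H$ (finitely many nonzero $c_h$), and for $k=\sum_x b_x x\in\ell^2(H)$, $\theta\ast k=\sum_g\big(\sum_x c_{gx^{-1}}b_x\big)g$. *)

From HB Require Import structures.
From mathcomp Require Import all_boot all_order all_algebra.
From mathcomp Require Import all_classical all_reals all_analysis.
From mathcomp Require Import complex.
Set Implicit Arguments. Unset Strict Implicit. Unset Printing Implicit Defensive.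
Import Order.TTheory GRing.Theory Num.Theory.
Local Open Scope classical_set_scope.
Local Open Scope ring_scope.

Definition borel (T : ptopologicalType) : Type := g_sigma_algebraType (@open T).
HB.instance Definition _ (T : ptopologicalType) :=
  Topological.on (borel T).

Definition is_group {T : Type} (mul : T -> T -> T) (inv : T -> T) (e : T) :=
  [/\ (forall x y z, mul x (mul y z) = mul (mul x y) z),
      (forall x, mul e x = x), (forall x, mul x e = x),
      (forall x, mul (inv x) x = e) & (forall x, mul x (inv x) = e)].

Definition is_topological_group {T : ptopologicalType}
  (mul : T -> T -> T) (inv : T -> T) (e : T) :=
  [/\ is_group mul inv e, continuous (fun p : T * T => mul p.1 p.2)
    & continuous inv].

Definition sigma_compact (T : ptopologicalType) :=
  exists K : nat -> set T, (forall n, compact (K n)) /\ \bigcup_n K n = [set: T].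

Definition is_subgroup {T : Type} (mul : T -> T -> T) (inv : T -> T) (e : T)
  (H : set T) :=
  [/\ H e, (forall x y, H x -> H y -> H (mul x y)) & (forall x, H x -> H (inv x))].

Definition discrete_subset {T : ptopologicalType} (H : set T) :=
  forall h, H h -> exists U : set T, [/\ open U, U h & U `&` H = [set h]].

Definition left_haar {R : realType} {T : ptopologicalType}
  (mul : T -> T -> T) (mu : {measure set (borel T) -> \bar R}) :=
  [/\ (forall (g : T) (A : set (borel T)), measurable A ->
         mu [set mul g a | a in A] = mu A),
      (forall K : set T, compact K -> (mu K < +oo)%E),
      (forall A : set (borel T), measurable A ->
         mu A = ereal_inf [set mu U | U in [set U : set T | open U /\ A `<=` U]]),
      (forall U : set T, open U ->
         mu U = ereal_sup [set mu K | K in [set K : set T | compact K /\ K `<=` U]])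
    & (0 < mu [set: borel T])%E].

Definition sqnorm {R : realType} (z : R[i]) : R :=
  (complex.Re z) ^+ 2 + (complex.Im z) ^+ 2.

(** f is (a representative of an element of) L^2(G, mu), complex valued. *)
Definition L2 {R : realType} {T : ptopologicalType}
  (mu : {measure set (borel T) -> \bar R}) (f : borel T -> R[i]) :=
  [/\ measurable_fun [set: borel T] (fun x => complex.Re (f x)),
      measurable_fun [set: borel T] (fun x => complex.Im (f x))
    & (\int[mu]_x (sqnorm (f x))%:E < +oo)%E].

Definition l2 {R : realType} {T : choiceType} (H : set T) (k : T -> R[i]) :=
  (\esum_(x in H) (sqnorm (k x))%:E < +oo)%E.

(** theta = sum_h c_h h in CH: finitely many nonzero coefficients, all on H. *)
Definition group_ring_elt {R : realType} {T : Type} (H : set T) (c : T -> R[i]) :=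
  finite_set [set h | c h != 0] /\ [set h | c h != 0] `<=` H.

(** (sum_h c_h L_h f)(x) = sum_h c_h f(h^{-1} x). *)
Definition left_action_sum {R : realType} {T : choiceType}
  (mul : T -> T -> T) (inv : T -> T) (H : set T) (c : T -> R[i]) (f : T -> R[i])
  (x : T) : R[i] :=
  \sum_(h \in H) c h * f (mul (inv h) x).

Definition theta_conv {R : realType} {T : choiceType}
  (mul : T -> T -> T) (inv : T -> T) (H : set T) (c : T -> R[i]) (k : T -> R[i])
  (g : T) : R[i] :=
  \sum_(x \in H) c (mul g (inv x)) * k x.

From HB Require Import structures.
From mathcomp Require Import all_boot all_order all_algebra.
From mathcomp Require Import all_classical all_reals all_analysis.
From mathcomp Require Import complex.
From mathcomp Require Import finmap measurable_realfun.
Set Implicit Arguments.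
Import Order.TTheory GRing.Theory Num.Theory.
Local Open Scope classical_set_scope.
Local Open Scope ring_scope.

(* Discreteness gives a neighbourhood W of e with W W^-1 ∩ H = {e}, so the translates
   h W y (h in H) are pairwise disjoint.  Hence each W y meets H at most once, which
   makes H countable by sigma-compactness, and the periodisation
   P x = sum_(h in H) |f (h x)|^2 satisfies int_(W y) P <= ||f||^2 < oo, so P is finite
   almost everywhere.  Countability also gives (sum_h c_h L_h f)(g x) = 0 for all g in H
   and almost all x.  Any x outside both null sets with f x != 0 yields the kernel
   vector k h := f (h x), since theta * k evaluated at g is (sum_h c_h L_h f)(g x). *)

Section GroupLaws.
Variables (T : Type) (mul : T -> T -> T) (inv : T -> T) (e : T).
Hypothesis group_mul : is_group mul inv e.

Lemma mulgA x y z : mul x (mul y z) = mul (mul x y) z.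
Proof. by case: group_mul. Qed.
Lemma mul1g x : mul e x = x. Proof. by case: group_mul. Qed.
Lemma mulg1 x : mul x e = x. Proof. by case: group_mul. Qed.
Lemma mulVg x : mul (inv x) x = e. Proof. by case: group_mul. Qed.
Lemma mulgV x : mul x (inv x) = e. Proof. by case: group_mul. Qed.

Lemma mulKg x y : mul (inv x) (mul x y) = y.
Proof. by rewrite mulgA mulVg mul1g. Qed.
Lemma mulKVg x y : mul x (mul (inv x) y) = y.
Proof. by rewrite mulgA mulgV mul1g. Qed.
Lemma mulgK x y : mul (mul y x) (inv x) = y.
Proof. by rewrite -mulgA mulgV mulg1. Qed.
Lemma mulgKV x y : mul (mul y (inv x)) x = y.
Proof. by rewrite -mulgA mulVg mulg1. Qed.

Lemma invg_unique x y : mul x y = e -> y = inv x.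
Proof. by move=> xy; rewrite -(mulKg x y) xy mulg1. Qed.
Lemma invgK x : inv (inv x) = x.
Proof. exact/esym/invg_unique/mulVg. Qed.
Lemma invgM x y : inv (mul x y) = mul (inv y) (inv x).
Proof. by apply/esym/invg_unique; rewrite -mulgA mulKVg mulgV. Qed.
Lemma invg1 : inv e = e.
Proof. by rewrite -[inv e]mul1g mulgV. Qed.

Variable H : set T.
Hypothesis subgroupH : is_subgroup mul inv e H.

Lemma group1 : H e. Proof. by case: subgroupH. Qed.
Lemma groupM {x y} : H x -> H y -> H (mul x y).
Proof. by case: subgroupH => _ + _; apply. Qed.
Lemma groupV {x} : H x -> H (inv x). Proof. by case: subgroupH => _ _; apply. Qed.
Lemma groupMV {x y} : H x -> H y -> H (mul x (inv y)).
Proof. by move=> Hx Hy; apply: groupM Hx (groupV Hy). Qed.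

End GroupLaws.

Section TopologicalGroup.
Variables (T : ptopologicalType) (mul : T -> T -> T) (inv : T -> T) (e : T).
Hypothesis topgroup : is_topological_group mul inv e.

Let group_mul : is_group mul inv e. Proof. by case: topgroup. Qed.

Lemma continuous_mul (U : topologicalType) (f g : U -> T) :
  continuous f -> continuous g -> continuous (fun x => mul (f x) (g x)).
Proof.
move=> cf cg x; apply: (@continuous_comp _ _ _ (fun x => (f x, g x))
  (fun p : T * T => mul p.1 p.2)).
  by apply: cvg_pair; [exact: cf | exact: cg].
by case: topgroup => _ + _; apply.
Qed.

Lemma continuous_mulr (y : T) : continuous (mul^~ y).
Proof.
by apply: (@continuous_mul T id (fun=> y)) => x; [exact: cvg_id | exact: cvg_cst].
Qed.

Lemma continuous_mull (y : T) : continuous (mul y).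
Proof.
by apply: (@continuous_mul T (fun=> y) id) => x; [exact: cvg_cst | exact: cvg_id].
Qed.

Lemma continuous_mulV : continuous (fun p : T * T => mul p.1 (inv p.2)).
Proof.
apply: (@continuous_mul _ fst (inv \o snd)) => p; first exact: cvg_fst.
apply: (@continuous_comp _ _ _ snd inv); first exact: cvg_snd.
by case: topgroup => _ _; apply.
Qed.

Variable H : set T.
Hypotheses (subgroupH : is_subgroup mul inv e H) (discreteH : discrete_subset H).

Lemma discrete_subgroup_nbhs : exists W : set T, [/\ open W, W e &
  forall a b, W a -> W b -> H (mul a (inv b)) -> mul a (inv b) = e].
Proof.
have [V [oV Ve VH]] := discreteH (group1 subgroupH).
have : nbhs ((e, e) : T * T) ((fun p : T * T => mul p.1 (inv p.2)) @^-1` V).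
  apply: continuous_mulV => /=; rewrite (invg1 group_mul) (mul1g group_mul).
  exact: open_nbhs_nbhs.
case=> -[A1 A2] /= [nA1 nA2] sub; exists (interior (A1 `&` A2)); split.
- exact: open_interior.
- by apply: nbhs_singleton; apply: nbhs_interior; exact: filterI.
- move=> a b /interior_subset [a1 a2] /interior_subset [b1 b2] Hab.
  have : (V `&` H) (mul a (inv b)) by split => //; exact: (sub (a, b)).
  by rewrite VH.
Qed.

End TopologicalGroup.

Section SigmaCompactCover.
Variables (T : ptopologicalType) (K : nat -> set T) (U : T -> set T).
Hypotheses (compactK : forall n, compact (K n)) (coverK : \bigcup_n K n = [set: T]).
Hypotheses (openU : forall y, open (U y)) (U_self : forall y, U y y).

Lemma compact_finite_subcover n :
  exists D : {fset T}, K n `<=` \bigcup_(y in [set` D]) U y.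
Proof.
have := compactK n; rewrite compact_cover => /(_ T [set: T] U) [] //.
- by move=> x _; exists x.
- by move=> D _ sub; exists D.
Qed.

Lemma bigcup_compact_cover (A : set T) : exists D : nat -> {fset T},
  A = \bigcup_n \bigcup_(y in [set` D n]) (A `&` U y).
Proof.
have /choice [D DP] := compact_finite_subcover.
exists D; apply/seteqP; split => [x Ax|x [n _ [y _ []//]]].
have : [set: T] x by []; rewrite -coverK => -[n _ /DP [y Dy Uy]].
by exists n => //; exists y.
Qed.

Lemma countable_locally_finite (A : set T) : (forall y, finite_set (A `&` U y)) ->
  countable A.
Proof.
move=> finA; have [D ->] := bigcup_compact_cover A.
apply: bigcup_countable => [|n _]; first exact: card_lexx.
by apply/finite_set_countable/bigcup_finite => // y _; exact: finA.
Qed.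

Lemma negligible_locally_negligible (R : realType)
    (mu : {measure set (borel T) -> \bar R}) (A : set T) :
  (forall y, mu.-negligible (A `&` U y : set (borel T))) ->
  mu.-negligible (A : set (borel T)).
Proof.
move=> nA; have [D ->] := bigcup_compact_cover A.
apply: negligible_bigcup => n; rewrite bigcup_fset.
elim: (finmap.enum_fset (D n)) => [|y s IH]; first by rewrite big_nil; exact: negligible_set0.
by rewrite big_cons; apply: negligibleU.
Qed.

End SigmaCompactCover.

Section SeparatingNeighbourhood.
Variables (T : ptopologicalType) (mul : T -> T -> T) (inv : T -> T) (e : T).
Hypothesis topgroup : is_topological_group mul inv e.
Variables (H : set T) (W : set T).
Hypotheses (subgroupH : is_subgroup mul inv e H) (openW : open W) (We : W e).
Hypothesis W_sep : forall a b, W a -> W b -> H (mul a (inv b)) -> mul a (inv b) = e.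

Let group_mul : is_group mul inv e. Proof. by case: topgroup. Qed.

Definition right_translate (y : T) : set T := (mul^~ (inv y)) @^-1` W.
Local Notation Wy := right_translate.

Lemma open_right_translate y : open (Wy y).
Proof.
rewrite /right_translate; apply: open_comp openW => x _.
exact: (continuous_mulr topgroup (inv y)).
Qed.

Lemma right_translate_self y : Wy y y.
Proof. by rewrite /right_translate /preimage /= (mulgV group_mul). Qed.

Lemma right_translate_sep {y s s'} : Wy y s -> Wy y s' -> H (mul s (inv s')) ->
  mul s (inv s') = e.
Proof.
move=> Ws Ws'; have := W_sep Ws Ws'.
by rewrite (invgM group_mul) (invgK group_mul) -(mulgA group_mul) (mulKg group_mul).
Qed.

Lemma right_translates_disjoint {y h h' s s'} : H h -> H h' -> Wy y s -> Wy y s' ->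
  mul h s = mul h' s' -> h = h'.
Proof.
move=> Hh Hh' Ws Ws' hs_eq.
have s's : mul s' (inv s) = mul (inv h') h.
  by rewrite -[s'](mulKg group_mul h') -hs_eq -(mulgA group_mul) (mulgK group_mul).
have : mul s' (inv s) = e.
  apply: (right_translate_sep Ws' Ws); rewrite s's.
  exact: (groupM subgroupH (groupV subgroupH Hh') Hh).
by rewrite s's => /(invg_unique group_mul); rewrite (invgK group_mul).
Qed.

Lemma finite_subgroup_right_translate y : finite_set (H `&` Wy y).
Proof.
have [[h [Hh Wh]]|noh] := pselect (exists h, (H `&` Wy y) h); last first.
  by apply: (sub_finite_set _ (finite_set0 T)) => h' Hh'; apply: noh; exists h'.
apply: (sub_finite_set _ (finite_set1 h)) => h' [Hh' Wh'].
have := right_translate_sep Wh' Wh (groupMV subgroupH Hh' Hh).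
by move=> /(congr1 (mul^~ h)); rewrite (mulgKV group_mul) (mul1g group_mul).
Qed.

End SeparatingNeighbourhood.

Section InvariantMeasure.
Variables (R : realType) (T : ptopologicalType).
Variables (mul : T -> T -> T) (inv : T -> T) (e : T).
Hypothesis topgroup : is_topological_group mul inv e.
Variable mu : {measure set (borel T) -> \bar R}.
Hypothesis mu_invariant : forall (g : T) (A : set (borel T)), measurable A ->
  mu [set mul g a | a in A] = mu A.

Let group_mul : is_group mul inv e. Proof. by case: topgroup. Qed.

Lemma open_measurable_borel (A : set T) : open A -> measurable (A : set (borel T)).
Proof. exact: sub_gen_smallest. Qed.

Lemma measurable_fun_mull (h : T) :
  measurable_fun [set: borel T] (mul h : borel T -> borel T).
Proof.
apply: (@measurability _ _ (borel T) (borel T) setT (mul h) (@open T)) => //.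
move=> _ [B oB <-]; rewrite setTI; apply: open_measurable_borel.
exact: (open_comp (fun x _ => continuous_mull topgroup h x) oB).
Qed.

Lemma measurable_preimage_mull (h : T) (A : set (borel T)) : measurable A ->
  measurable ((mul h) @^-1` A : set (borel T)).
Proof. by move=> mA; have := measurable_fun_mull h measurableT mA; rewrite setTI. Qed.

Lemma measure_preimage_mull (h : T) (A : set (borel T)) : measurable A ->
  mu ((mul h) @^-1` A) = mu A.
Proof.
move=> mA; rewrite -[RHS](mu_invariant (inv h) mA); congr (mu _).
apply/seteqP; split => [x Ax|_ [a Aa <-]]; last by rewrite /= (mulKVg group_mul).
by exists (mul h x); rewrite // (mulKg group_mul).
Qed.

Lemma negligible_preimage_mull (h : T) (N : set (borel T)) : mu.-negligible N ->
  mu.-negligible ((mul h) @^-1` N : set (borel T)).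
Proof.
case=> M [mM M0 NM]; exists ((mul h) @^-1` M); split => [||x /NM //].
- exact: measurable_preimage_mull.
- by rewrite measure_preimage_mull.
Qed.

Lemma ge0_integral_mull (h : T) (D : set (borel T)) (g : borel T -> \bar R) :
  measurable D -> measurable_fun D g -> (forall x, D x -> 0 <= g x)%E ->
  (\int[mu]_(x in (mul h) @^-1` D) g (mul h x) = \int[mu]_(y in D) g y)%E.
Proof.
move=> mD mg g0.
transitivity (\int[pushforward mu (mul h : borel T -> borel T)]_(y in D) g y)%E.
  apply/esym/ge0_integral_pushforward => // [|y /set_mem]; last exact: g0.
  exact: measurable_fun_mull.
apply: eq_measure_integral => [|mh A mA _];
  [exact: measurable_fun_mull | exact: measure_preimage_mull].
Qed.

End InvariantMeasure.

(* [enum_inv H enum] inverts [enum] on [H]; off [enum @` H] it is the junk value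
   [point]. *)
Definition enum_hit {T : Type} (H : set T) (enum : T -> nat) n : bool :=
  `[< exists h, H h /\ enum h = n >].
Definition enum_inv {T : pointedType} (H : set T) (enum : T -> nat) n : T :=
  xget point [set h | H h /\ enum h = n].

Section CountableSum.
Variables (R : realType) (T : pointedType) (H : set T) (enum : T -> nat).
Hypothesis enum_inj : {in H &, injective enum}.
Local Notation enum_hit := (enum_hit H enum).
Local Notation enum_inv := (enum_inv H enum).

Lemma enum_invP {n} : enum_hit n -> H (enum_inv n) /\ enum (enum_inv n) = n.
Proof. by move=> /asboolP ex; exact: (xgetPex point ex). Qed.

Lemma enum_hit_enum {h} : H h -> enum_hit (enum h).
Proof. by move=> Hh; apply/asboolP; exists h. Qed.

Lemma enumK h : H h -> enum_inv (enum h) = h.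
Proof.
move=> Hh; have [H_inv enum_inv_eq] := enum_invP (enum_hit_enum Hh).
by apply: enum_inj => //; exact: mem_set.
Qed.

Lemma esum_enum (a : T -> \bar R) : (forall h, H h -> 0 <= a h)%E ->
  (\esum_(h in H) a h = \sum_(n <oo) (if enum_hit n then a (enum_inv n) else 0))%E.
Proof.
move=> a0; rewrite -eseries_mkcond nneseries_esum => [|n /enum_invP [Hn _]];
  last exact: a0.
have -> : [set n | enum_hit n] = enum @` H.
  apply/seteqP; split => [n /enum_invP [Hn <-]|_ [h Hh <-]]; last exact: enum_hit_enum.
  by exists (enum_inv n).
rewrite esum_image => [|x y Hx Hy]; last exact: enum_inj.
by apply: eq_esum => h Hh; rewrite enumK.
Qed.

End CountableSum.

Lemma negligible_translates (R : realType) (T : ptopologicalType)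
    (mul : T -> T -> T) (inv : T -> T) (e : T) (mu : {measure set (borel T) -> \bar R})
    (H : set T) (enum : T -> nat) (P : T -> Prop) :
  is_topological_group mul inv e ->
  (forall (g : T) (A : set (borel T)), measurable A -> mu [set mul g a | a in A] = mu A) ->
  {in H &, injective enum} ->
  {ae mu, forall x, P x} ->
  mu.-negligible (~` [set x | forall h, H h -> P (mul h x)] : set (borel T)).
Proof.
move=> topgroup mu_invariant enum_inj aeP.
pose bad n : set (borel T) :=
  if enum_hit H enum n then (mul (enum_inv H enum n)) @^-1` (~` P) else set0.
apply: (@negligibleS _ _ _ _ (\bigcup_n bad n)).
  move=> x /= /existsNP [h /not_implyP [Hh nPhx]]; exists (enum h) => //.
  by rewrite /bad enum_hit_enum // enumK.
apply: negligible_bigcup => n; rewrite /bad; case: ifP => _; last exact: negligible_set0.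
exact: (negligible_preimage_mull topgroup _ mu_invariant _ aeP).
Qed.

Lemma theta_conv_translate {R : realType} {T : choiceType}
    (mul : T -> T -> T) (inv : T -> T) (e : T) (H : set T) (c f : T -> R[i]) (x g : T) :
  is_group mul inv e -> is_subgroup mul inv e H -> H g ->
  theta_conv mul inv H c (fun h => f (mul h x)) g = left_action_sum mul inv H c f (mul g x).
Proof.
move=> grp sgH Hg; rewrite /theta_conv /left_action_sum.
rewrite (@reindex_fsbig _ _ _ _ _ (fun h => mul (inv h) g) H H); last first.
  split=> [h Hh|h h' _ _ /= eq_hg|z Hz].
  - exact: (groupM sgH (groupV sgH Hh) Hg).
  - have : inv h = inv h' by rewrite -(mulgK grp g (inv h)) eq_hg (mulgK grp).
    by move=> /(congr1 inv); rewrite !(invgK grp).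
  - exists (mul g (inv z)); first exact: (groupMV sgH Hg Hz).
    by rewrite (invgM grp) (invgK grp) (mulgKV grp).
apply: eq_fsbigr => h _.
by rewrite (invgM grp) (invgK grp) (mulKVg grp) -(mulgA grp).
Qed.

Definition periodization {R : realType} {T : choiceType} (mul : T -> T -> T) (H : set T)
  (phi : T -> \bar R) (x : T) : \bar R := (\esum_(h in H) phi (mul h x))%E.

Section Periodization.
Variables (R : realType) (T : ptopologicalType).
Variables (mul : T -> T -> T) (inv : T -> T) (e : T).
Hypothesis topgroup : is_topological_group mul inv e.
Variables (H W : set T) (enum : T -> nat).
Hypotheses (subgroupH : is_subgroup mul inv e H) (openW : open W) (We : W e).
Hypothesis W_sep : forall a b, W a -> W b -> H (mul a (inv b)) -> mul a (inv b) = e.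
Hypothesis enum_inj : {in H &, injective enum}.
Variable mu : {measure set (borel T) -> \bar R}.
Hypothesis mu_invariant : forall (g : T) (A : set (borel T)), measurable A ->
  mu [set mul g a | a in A] = mu A.
Variable phi : borel T -> \bar R.
Hypotheses (phi_ge0 : forall x, (0 <= phi x)%E) (mphi : measurable_fun [set: borel T] phi).

Let group_mul : is_group mul inv e. Proof. by case: topgroup. Qed.
Local Notation Wy := (@right_translate T mul inv W).
Local Notation P := (periodization mul H phi).
Let term n x : \bar R :=
  if enum_hit H enum n then phi (mul (enum_inv H enum n) x) else 0%E.

Let term_ge0 n x : (0 <= term n x)%E.
Proof. by rewrite /term; case: ifP. Qed.

Let measurable_term n (D : set (borel T)) : measurable D -> measurable_fun D (term n).
Proof.
move=> mD; rewrite /term; case: enum_hit; last exact: measurable_cst.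
apply: (measurable_funS measurableT) => //.
exact: measurableT_comp mphi (measurable_fun_mull topgroup _).
Qed.

Let periodization_series x : P x = (\sum_(n <oo) term n x)%E.
Proof. by rewrite /periodization (@esum_enum R T H enum enum_inj). Qed.

Lemma measurable_periodization (D : set (borel T)) : measurable D -> measurable_fun D P.
Proof.
move=> mD; have := @ge0_emeasurable_sum _ (borel T) R D term xpredT
  (fun n x _ _ => term_ge0 n x) (fun n _ => measurable_term n mD).
by apply: eq_measurable_fun => x _; rewrite periodization_series; exact: eq_eseriesl.
Qed.

Let translate y n : set (borel T) :=
  if enum_hit H enum n then (mul (inv (enum_inv H enum n))) @^-1` (Wy y) else set0.

Let measurable_Wy y : measurable (Wy y : set (borel T)).
Proof. apply: open_measurable_borel; exact: (open_right_translate topgroup _ openW). Qed.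

Let measurable_translate y n : measurable (translate y n).
Proof.
by rewrite /translate; case: enum_hit => //; exact: (measurable_preimage_mull topgroup).
Qed.

Let trivIset_translate y : trivIset [set: nat] (translate y).
Proof.
move=> i j _ _ [x []]; rewrite /translate.
case: ifP => [/enum_invP [Hi ei]|//]; case: ifP => [/enum_invP [Hj ej]|//] Wi Wj.
rewrite -ei -ej; congr enum.
apply: (right_translates_disjoint topgroup _ subgroupH W_sep Hi Hj Wi Wj).
by rewrite !(mulKVg group_mul).
Qed.

Let integral_term y n :
  (\int[mu]_(x in Wy y) term n x = \int[mu]_(x in translate y n) phi x)%E.
Proof.
rewrite /term /translate; case: ifP => _; last by rewrite integral0 integral_set0.
rewrite -[RHS](ge0_integral_mull topgroup _ mu_invariant (enum_inv H enum n)) //.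
- by congr (integral _ _ _); apply/funext => x; rewrite /preimage /= (mulKg group_mul).
- exact: (measurable_preimage_mull topgroup).
- exact: (measurable_funS measurableT).
Qed.

Lemma integral_periodization_right_translate y :
  (\int[mu]_(x in Wy y) P x <= \int[mu]_x phi x)%E.
Proof.
under eq_integral => x _ do rewrite periodization_series.
rewrite integral_nneseries // => [|n]; last exact: measurable_term.
under eq_eseriesr => n _ do rewrite integral_term.
rewrite -ge0_integral_bigcup // => [|]; last exact: (measurable_funS measurableT).
apply: ge0_subset_integral => //; exact: bigcupT_measurable.
Qed.

Lemma negligible_periodization_infinite (K : nat -> set T) :
  (forall n, compact (K n)) -> \bigcup_n K n = [set: T] ->
  (\int[mu]_x phi x < +oo)%E ->
  mu.-negligible ([set x | ~ (P x < +oo)%E] : set (borel T)).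
Proof.
move=> compactK coverK phi_int.
apply: (negligible_locally_negligible _ _ compactK coverK
  (open_right_translate topgroup _ openW) (right_translate_self topgroup _ We)) => y.
have P_int : mu.-integrable (Wy y) P.
  apply/integrableP; split; first exact: measurable_periodization.
  have -> : (\int[mu]_(x in Wy y) `|P x| = \int[mu]_(x in Wy y) P x)%E.
    by apply: eq_integral => x _; rewrite gee0_abs // esum_ge0.
  exact: le_lt_trans (integral_periodization_right_translate y) phi_int.
have [N [mN N0 sub]] := integrable_ae (measurable_Wy y) P_int.
exists N; split => // x [/= Pinf Wx]; apply: sub => /= fin.
by apply: Pinf; have := fin Wx; rewrite ge0_fin_numE // esum_ge0.
Qed.

End Periodization.

Lemma measurable_sqnorm {R : realType} {d : measure_display} {X : measurableType d}
    (f : X -> R[i]) :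
  measurable_fun [set: X] (fun x => complex.Re (f x)) ->
  measurable_fun [set: X] (fun x => complex.Im (f x)) ->
  measurable_fun [set: X] (fun x => (sqnorm (f x))%:E).
Proof.
by move=> mRe mIm; apply/measurable_EFinP/measurable_funD; exact: measurable_funX.
Qed.

Theorem proposition5p3 (R : realType) (T : ptopologicalType)
  (mul : T -> T -> T) (inv : T -> T) (e : T)
  (mu : {measure set (borel T) -> \bar R}) (H : set T) (c : T -> R[i]) :
  is_topological_group mul inv e ->
  hausdorff_space T ->
  locally_compact [set: T] ->
  sigma_compact T ->
  left_haar mul mu ->
  is_subgroup mul inv e H ->
  discrete_subset H ->
  group_ring_elt H c ->
  (exists f : borel T -> R[i],
      [/\ L2 mu f, ~ {ae mu, forall x, f x = 0}
        & {ae mu, forall x, left_action_sum mul inv H c f x = 0}]) ->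
  exists k : T -> R[i],
    [/\ l2 H k, (exists x, H x /\ k x != 0)
      & forall g, H g -> theta_conv mul inv H c k g = 0].
Proof.
move=> topgroup _ _ [K [compactK coverK]] [mu_invariant _ _ _ _] subgroupH discreteH _
  [f [[mRe mIm f_int] f_nonzero action_ae]].
have group_mul : is_group mul inv e by case: topgroup.
have [W [openW We W_sep]] := discrete_subgroup_nbhs topgroup subgroupH discreteH.
have /countable_injP [enum enum_inj] : countable H.
  apply: (countable_locally_finite _ _ compactK coverK
    (open_right_translate topgroup _ openW) (right_translate_self topgroup _ We)).
  exact: (finite_subgroup_right_translate topgroup _ subgroupH W_sep).
pose phi x := (sqnorm (f x))%:E.
have phi_ge0 x : (0 <= phi x)%E by rewrite lee_fin addr_ge0 // sqr_ge0.
have bad_action := negligible_translates mu topgroup mu_invariant enum_inj action_ae.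
have bad_sum := negligible_periodization_infinite topgroup W subgroupH openW We W_sep
  enum_inj mu mu_invariant phi_ge0 (measurable_sqnorm _ mRe mIm)
  K compactK coverK f_int.
have [x [fx0 good_action good_sum]] : exists x, [/\ f x != 0,
    forall g, H g -> left_action_sum mul inv H c f (mul g x) = 0 &
    (periodization mul H phi x < +oo)%E].
  apply: contrapT => no_good; apply: f_nonzero.
  apply: negligibleS (negligibleU bad_action bad_sum) => x /= fx0.
  apply: contrapT => /not_orP [/contrapT ? /contrapT ?].
  by apply: no_good; exists x; split => //; exact/eqP.
exists (fun h => f (mul h x)); split => [//||g Hg].
- by exists e; split; [exact: group1 subgroupH | rewrite (mul1g group_mul)].
- by rewrite (theta_conv_translate c f x g group_mul subgroupH Hg) good_action.
Qed.
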